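(* For every positive integer $n$, the number $J_n$ of vectors $(\delta_0,\ldots,\delta_n)\in\{-1,1\}^{n+1}$ with $\sum_{i=0}^n\delta_i\binom{n}{i}=0$ equals the number $x_n$ of arrays $(a_0,\ldots,a_n)\in\{0,1\}^{n+1}$ whose $n$-th difference is zero, i.e. with $\sum_{t=0}^n\binom{n}{t}(-1)^t a_{n-t}=0$.
   Context: For a list $L=[a_0,\ldots,a_n]$ the first difference is $\Delta(L)=[a_1-a_0,\ldots,a_n-a_{n-1}]$ and $\Delta^k=\Delta(\Delta^{k-1})$; the $n$-th difference of a list of $n+1$ elements is the single number $\sum_{t=0}^n\binom{n}{t}(-1)^ta_{n-t}$. *)

From mathcomp Require Import all_boot all_order all_algebra.
Set Implicit Arguments. Unset Strict Implicit. Unset Printing Implicit Defensive.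
Import Order.TTheory GRing.Theory Num.Theory.
Local Open Scope ring_scope.

Definition diff_list (L : seq int) : seq int :=
  [seq (nth 0 L i.+1 - nth 0 L i) | i <- iota 0 (size L).-1].

Definition diffk (k : nat) (L : seq int) : seq int := iter k diff_list L.

Definition nth_diff (n : nat) (L : seq int) : int := nth 0 (diffk n L) 0.

Definition sgn (b : bool) : int := if b then 1 else -1.

Definition J (n : nat) : nat :=
  #|[set d : {ffun 'I_n.+1 -> bool} |
     \sum_(i < n.+1) sgn (d i) * ('C(n, i))%:Z == 0]|.

Definition x (n : nat) : nat :=
  #|[set a : {ffun 'I_n.+1 -> bool} |
     nth_diff n [seq ((a i : nat))%:Z | i <- enum 'I_n.+1] == 0]|.

From mathcomp Require Import all_boot all_order all_algebra.
From mathcomp Require Import zify ring.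
Set Implicit Arguments. Unset Strict Implicit. Unset Printing Implicit Defensive.
Import Order.TTheory GRing.Theory Num.Theory.
Local Open Scope ring_scope.

(* The n-th difference of (a_0, ..., a_n) is sum_i (-1)^(n+i) C(n,i) a_i.  Reading
   the bits a_i, after flipping those with n + i odd, as signs
   delta_i = (-1)^(n+i) (2 a_i - 1) is an involution of {0,1}^(n+1), and it turns
   sum_i delta_i C(n,i) into twice the n-th difference minus the alternating sum
   sum_i (-1)^(n+i) C(n,i), which vanishes for n > 0. *)

Section BinomialSums.

Variable R : pzRingType.

Lemma sum_sign_binomial_diff (k : nat) (F : nat -> R) :
  \sum_(i < k.+1) (-1) ^+ (k + i) * 'C(k, i)%:R * (F i.+1 - F i) =
  \sum_(i < k.+2) (-1) ^+ (k.+1 + i) * 'C(k.+1, i)%:R * F i.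
Proof.
have sign2 i : (-1) ^+ (k.+1 + i.+1) = (-1) ^+ (k + i) :> R.
  by rewrite addSn addnS !exprS !mulN1r opprK.
rewrite [RHS]big_ord_recl /=.
under [in RHS]eq_bigr => i _ do rewrite /bump /= add1n sign2 binS natrD mulrDr mulrDl.
rewrite big_split /= addrA.
under eq_bigr => i _ do rewrite mulrBr.
rewrite sumrB [RHS]addrC; congr (_ + _).
rewrite [in RHS]big_ord_recr /= (bin_small (ltnSn k)) mulr0 mul0r addr0.
rewrite big_ord_recl /= !addn0 !bin0 !mulr1 exprS mulN1r mulNr opprD -sumrN.
by congr (_ + _); apply: eq_bigr => i _; rewrite /bump /= add1n addnS exprS mulN1r !mulNr opprK.
Qed.

Lemma sum_sign_binomial (n : nat) : (0 < n)%N ->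
  \sum_(i < n.+1) (-1) ^+ (n + i) * 'C(n, i)%:R = 0 :> R.
Proof.
move=> n_gt0.
have alt_binomial : \sum_(i < n.+1) (-1) ^+ i * 'C(n, i)%:R = 0 :> R.
  have := exprDn_comm n (commrN1 (1 : R)).
  rewrite subrr expr0n gtn_eqF //= mulr0n => /esym {2}<-.
  by apply: eq_bigr => i _; rewrite expr1n mul1r mulr_natr.
under eq_bigr do rewrite exprD -mulrA.
by rewrite -mulr_sumr alt_binomial mulr0.
Qed.

End BinomialSums.

Lemma size_diff_list (L : seq int) : size (diff_list L) = (size L).-1.
Proof. by rewrite size_map size_iota. Qed.

Lemma nth_diff_list (L : seq int) j :
  (j.+1 < size L)%N -> (diff_list L)`_j = L`_j.+1 - L`_j.
Proof.
by move=> lt_jL; rewrite (nth_map 0%N) ?nth_iota ?size_iota //; case: (size L) lt_jL.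
Qed.

Lemma nth_diffk k (L : seq int) j : (j + k < size L)%N ->
  (diffk k L)`_j = \sum_(i < k.+1) (-1) ^+ (k + i) * 'C(k, i)%:R * L`_(j + i).
Proof.
elim: k L j => [|k IHk] L j lt_jkL.
  by rewrite big_ord1 /= !addn0 bin0 expr0 !mul1r.
rewrite /diffk iterSr -/(diffk k _) IHk; last first.
  by rewrite size_diff_list; move: lt_jkL; case: (size L) => //= m; lia.
rewrite -(sum_sign_binomial_diff k (fun i => L`_(j + i))).
apply: eq_bigr => i _; rewrite nth_diff_list ?addnS //.
by have := ltn_ord i; lia.
Qed.

Lemma nth_diff_sum n (L : seq int) : (n < size L)%N ->
  nth_diff n L = \sum_(i < n.+1) (-1) ^+ (n + i) * 'C(n, i)%:R * L`_i.
Proof. by move=> lt_nL; rewrite /nth_diff nth_diffk. Qed.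

Lemma sgn_addb_odd (b : bool) m : sgn (b (+) odd m) = (-1) ^+ m * (2 * b%:Z - 1).
Proof. by rewrite -signr_odd; case: (odd m); case: b. Qed.

Definition sign_flip n (a : {ffun 'I_n.+1 -> bool}) : {ffun 'I_n.+1 -> bool} :=
  [ffun i => a i (+) odd (n + i)].

Lemma sign_flipK n : involutive (@sign_flip n).
Proof. by move=> a; apply/ffunP => i; rewrite !ffunE addbK. Qed.

Lemma sum_sgn_sign_flip n (a : {ffun 'I_n.+1 -> bool}) : (0 < n)%N ->
  \sum_(i < n.+1) sgn (sign_flip a i) * 'C(n, i)%:Z =
  2 * nth_diff n [seq (a i : nat)%:Z | i <- enum 'I_n.+1].
Proof.
move=> n_gt0; rewrite nth_diff_sum; last by rewrite size_map size_enum_ord.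
rewrite mulr_sumr.
rewrite -[RHS]subr0 -[X in _ - X](sum_sign_binomial int n_gt0) -sumrB.
apply: eq_bigr => i _.
rewrite ffunE sgn_addb_odd (nth_map ord0) ?size_enum_ord // nth_ord_enum natz.
ring.
Qed.

Theorem mainTheorem4 (n : nat) : (0 < n)%N -> J n = x n.
Proof.
move=> n_gt0; have flip_inj := inv_inj (@sign_flipK n).
rewrite /J /x -(card_imset _ flip_inj); apply: eq_card => d.
rewrite -{1}[d]sign_flipK mem_imset // !inE sum_sgn_sign_flip //.
by rewrite mulf_eq0.
Qed.
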